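(* Let $L\le U$ be integers with $U-L+1$ a power of $2$, and let $\mathcal{T}(L,U)$ be the dyadic tree on leaves $L,\ldots,U$. Fix a leaf $i\in[L,U]$, and let $[l_1,u_1],[l_2,u_2],\ldots$ be all intervals $[l,u]$ indexing nodes of $\mathcal{T}(L,U)$ such that $i\in[l,u]$ and the node indexed by $[l,u]$ is a left node, listed in ascending order of $u_k-l_k$. Then for every $k$, $u_k-i\ge 2^{k-1}-1$.
   Context: The dyadic tree $\mathcal{T}(L,U)$ (for $U-L+1$ a power of $2$) is the complete binary tree whose leaves are indexed by the integers $L,L+1,\ldots,U$ in order, and in which, whenever two sibling nodes are indexed by intervals $[l_1,u_1]$ and $[u_1+1,u_2]$, their parent is indexed by $[l_1,u_2]$ (a leaf $m$ is identified with the interval $[m,m]$). A node whose indexing interval precedes its sibling's indexing interval is a left node; its sibling is a right node (the root has no sibling and is neither). *)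

From Stdlib Require Import ZArith List Sorting.Sorted.
Import ListNotations.
Open Scope Z_scope.

Inductive itree : Type :=
| Leaf (m : Z)
| Node (l u : Z) (t1 t2 : itree).

Definition root_interval (t : itree) : Z * Z :=
  match t with
  | Leaf m => (m, m)
  | Node l u _ _ => (l, u)
  end.

Fixpoint dyadic (L : Z) (n : nat) : itree :=
  match n with
  | O => Leaf L
  | S n' => Node L (L + 2 ^ Z.of_nat n - 1)
                 (dyadic L n') (dyadic (L + 2 ^ Z.of_nat n') n')
  end.

(* T(L,U) for U - L + 1 = 2^n. *)
Definition dyadic_tree (L : Z) (n : nat) : itree := dyadic L n.

(* Intervals indexing the left nodes of a tree: in each internal node, the
   child whose interval precedes its sibling's (the first child) is a left
   node.  The root is not a left node. *)
Fixpoint left_intervals (t : itree) : list (Z * Z) :=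
  match t with
  | Leaf _ => []
  | Node _ _ t1 t2 =>
      root_interval t1 :: left_intervals t1 ++ left_intervals t2
  end.

(* The left nodes containing a leaf i form a chain.  If p is strictly below q
   in that chain, then p lies inside the left half of q, and p's sibling lies
   there too, to the right of p; so q is at least twice as wide as p and ends
   at least width(p) after p.  Starting from a width-1 node ending at or after
   i, the widths thus grow like 2^(k-1) and the right ends like 2^(k-1) - 1. *)
From Stdlib Require Import ZArith List Sorting.Sorted Lia.
Import ListNotations.
Open Scope Z_scope.

Definition width (p : Z * Z) : Z := snd p - fst p + 1.

Definition left_step (p q : Z * Z) : Prop :=
  2 * width p <= width q /\ snd p + width p <= snd q.

Lemma two_pow_pos (n : nat) : 0 < 2 ^ Z.of_nat n.
Proof. apply Z.pow_pos_nonneg; lia. Qed.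

Lemma two_pow_succ (n : nat) : 2 ^ Z.of_nat (S n) = 2 * 2 ^ Z.of_nat n.
Proof. rewrite Nat2Z.inj_succ, Z.pow_succ_r; lia. Qed.

Lemma root_interval_dyadic (L : Z) (n : nat) :
  root_interval (dyadic L n) = (L, L + 2 ^ Z.of_nat n - 1).
Proof. destruct n; [cbn; f_equal; lia | reflexivity]. Qed.

(* Every left interval leaves room for its sibling, of the same width, inside
   the tree. *)
Lemma left_intervals_dyadic_bounds (n : nat) : forall (L : Z) (q : Z * Z),
  In q (left_intervals (dyadic L n)) ->
  L <= fst q <= snd q /\ snd q + width q <= L + 2 ^ Z.of_nat n - 1.
Proof.
  induction n as [|n IH]; intros L q Hq; [contradiction|].
  cbn [dyadic left_intervals] in Hq; rewrite root_interval_dyadic in Hq.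
  rewrite two_pow_succ; pose proof (two_pow_pos n).
  destruct Hq as [<-|Hq]; [unfold width; cbn [fst snd]; lia|].
  apply in_app_or in Hq as [Hq|Hq]; apply IH in Hq; lia.
Qed.

Lemma left_intervals_dyadic_chain (n : nat) : forall (L i : Z) (p q : Z * Z),
  In p (left_intervals (dyadic L n)) -> In q (left_intervals (dyadic L n)) ->
  fst p <= i <= snd p -> fst q <= i <= snd q ->
  p = q \/ left_step p q \/ left_step q p.
Proof.
  induction n as [|n IH]; intros L i p q Hp Hq Hip Hiq; [contradiction|].
  cbn [dyadic left_intervals] in Hp, Hq; rewrite root_interval_dyadic in Hp, Hq.
  set (halves := left_intervals (dyadic L n) ++
                 left_intervals (dyadic (L + 2 ^ Z.of_nat n) n)) in Hp, Hq.
  assert (Hhalf : forall r, In r halves -> fst r <= i <= snd r ->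
    (In r (left_intervals (dyadic L n)) /\
       L <= fst r /\ snd r + width r <= L + 2 ^ Z.of_nat n - 1) \/
    (In r (left_intervals (dyadic (L + 2 ^ Z.of_nat n) n)) /\
       L + 2 ^ Z.of_nat n <= fst r)).
  { intros r Hr Hir; apply in_app_or in Hr as [Hr|Hr]; [left|right];
      pose proof (left_intervals_dyadic_bounds _ _ _ Hr) as Hb; split; auto; lia. }
  unfold left_step, width in *.
  (* Two intervals from different halves, or the left child and an interval
     of the right half, cannot both contain i. *)
  destruct Hp as [<-|Hp]; destruct Hq as [<-|Hq]; [now left | ..];
    repeat match goal with
    | H : In ?r halves |- _ =>
        destruct (Hhalf r H) as [[? ?]|[? ?]]; [assumption | |]; clear H
    end; cbn [fst snd] in *; try lia; eauto.
Qed.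

Lemma sorted_strengthen {A : Type} (le R : A -> A -> Prop) (s : list A) :
  Sorted le s -> NoDup s ->
  (forall x y, In x s -> In y s -> x = y \/ R x y \/ R y x) ->
  (forall x y, In x s -> In y s -> le x y -> ~ R y x) ->
  Sorted R s.
Proof.
  induction 1 as [|a t Hs IHs Hd]; intros Hnd Hcmp Hasym; constructor.
  - inversion Hnd; subst.
    apply IHs; auto; intros; [apply Hcmp | apply Hasym]; cbn; auto.
  - destruct Hd as [|b t' Hab]; constructor.
    inversion Hnd as [|? ? Ha]; subst.
    destruct (Hcmp a b) as [->|[Hr|Hr]]; cbn; auto.
    + exfalso; apply Ha; cbn; auto.
    + exfalso; apply (Hasym a b); cbn; auto.
Qed.

Lemma sorted_nth_step {A : Type} (R : A -> A -> Prop) (P : nat -> A -> Prop)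
    (d : A) :
  (forall m x y, R x y -> P m x -> P (S m) y) ->
  forall (j : nat) (s : list A) (a : A) (m : nat),
  Sorted R (a :: s) -> P m a -> (j <= length s)%nat ->
  P (m + j)%nat (nth j (a :: s) d).
Proof.
  intros Hstep; induction j as [|j IH]; intros s a m Hs Ha Hj.
  - now rewrite Nat.add_0_r.
  - destruct s as [|b t]; cbn in Hj; [lia|].
    inversion Hs as [|? ? Hs' Hd]; subst; inversion Hd; subst.
    rewrite <- Nat.add_succ_comm; apply (IH t b); eauto; cbn; lia.
Qed.

Theorem lemma3 (L U : Z) (n : nat) (i : Z) (s : list (Z * Z)) :
  U - L + 1 = 2 ^ Z.of_nat n ->
  L <= i <= U ->
  NoDup s ->
  (forall p : Z * Z,
      In p s <-> (In p (left_intervals (dyadic_tree L n)) /\ fst p <= i <= snd p)) ->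
  Sorted (fun p q : Z * Z => snd p - fst p <= snd q - fst q) s ->
  forall k : nat, (1 <= k <= length s)%nat ->
    snd (nth (k - 1) s (0, 0)) - i >= 2 ^ Z.of_nat (k - 1) - 1.
Proof.
  intros _ _ Hnd Hs Hsort k Hk.
  assert (Hcov : forall p, In p s -> fst p <= i <= snd p) by (apply Hs).
  assert (Hchain : Sorted left_step s).
  { apply (sorted_strengthen _ _ s Hsort Hnd).
    - intros p q Hp Hq; apply Hs in Hp as [], Hq as [];
        eapply left_intervals_dyadic_chain; eauto.
    - intros p q Hp Hq Hpq [Hw _]; apply Hcov in Hq; unfold width in *; lia. }
  destruct s as [|a t]; cbn in Hk; [lia|].
  pose proof (Hcov a (or_introl eq_refl)).
  apply (sorted_nth_step left_step
           (fun m p => 2 ^ Z.of_nat m <= width p /\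
                       snd p - i >= 2 ^ Z.of_nat m - 1) (0, 0))
    with (m := 0%nat) (j := (k - 1)%nat) in Hchain; [apply Hchain | | | lia].
  - intros m p q [Hw Hr] [Hw' Hr']; rewrite two_pow_succ; lia.
  - unfold width; cbn [fst snd] in *; lia.
Qed.
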